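(* Let $T\subset\mathbb{R}^3$ be a smooth (open) surface patch with smooth unit normal field $\mathring\nu$, and let $P=I-\mathring\nu\otimes\mathring\nu$. Let $u\in[C^2(\overline T)]^3$, $\phi=\mathrm{id}+u$, and $F:=\nabla_\tau\phi=P+\nabla_\tau u$, and assume $\operatorname{rank}F=2$ on $T$. Let $\nu:=\operatorname{cof}(F)\mathring\nu/\|\operatorname{cof}(F)\mathring\nu\|_2$ (the deformed normal pulled back to $T$, so that $F^T\nu=0$). Let $\sigma$ be a symmetric $3\times3$ matrix field on $T$ with $\sigma\mathring\nu=0$. Then pointwise on $T$ $$\sigma:\big(F^T\nabla_\tau\nu-\nabla_\tau\mathring\nu\big)=-\,\sigma:\Big(\mathcal H_\nu+\big(1-\mathring\nu\cdot\nu\big)\nabla_\tau\mathring\nu\Big),\qquad \mathcal H_\nu:=\sum_{i=1}^3\nu_i\,\nabla_\tau^2u_i .$$ In particular, for such $\sigma$, $\int_T\sigma:(F^T\nabla_\tau\nu-\nabla_\tau\mathring\nu)\,dx=-\int_T\sigma:(\mathcal H_\nu+(1-\mathring\nu\cdot\nu)\nabla_\tau\mathring\nu)\,dx$.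
   Context: For a scalar function $f$ on $T$, $\nabla_\tau f\in\mathbb{R}^3$ is the surface (tangential) gradient, e.g. $\nabla_\tau f=P\nabla\tilde f$ for any smooth extension $\tilde f$. For a vector field $w$, $\nabla_\tau w$ is the $3\times3$ matrix with $(\nabla_\tau w)_{ij}=(\nabla_\tau w_i)_j$ (so $(\nabla_\tau w)\mathring\nu=0$). The surface Hessian of a scalar $f$ is $\nabla_\tau^2f:=\nabla_\tau(\nabla_\tau f)$, i.e. $(\nabla^2_\tau f)_{jk}=(\nabla_\tau(\nabla_\tau f)_j)_k$. $A:B=\sum_{ij}A_{ij}B_{ij}$, $\operatorname{cof}$ denotes the cofactor matrix and $a\otimes b=ab^T$. *)

From Stdlib Require Import Reals Lra ClassicalEpsilon.
Open Scope R_scope.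

Record pt := mkpt { p0 : R; p1 : R; p2 : R }.

Definition coord (x : pt) (i : nat) : R :=
  match i with 0%nat => p0 x | 1%nat => p1 x | 2%nat => p2 x | _ => 0 end.

Definition shift (x : pt) (k : nat) (t : R) : pt :=
  match k with
  | 0%nat => mkpt (p0 x + t) (p1 x) (p2 x)
  | 1%nat => mkpt (p0 x) (p1 x + t) (p2 x)
  | _ => mkpt (p0 x) (p1 x) (p2 x + t)
  end.

Definition dist2 (x y : pt) : R :=
  (p0 x - p0 y)^2 + (p1 x - p1 y)^2 + (p2 x - p2 y)^2.

Definition ball (x : pt) (r : R) : pt -> Prop := fun y => dist2 x y < r^2.

Definition open3 (Om : pt -> Prop) : Prop :=
  forall x, Om x -> exists r, 0 < r /\ forall y, ball x r y -> Om y.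

Definition continuous_on (Om : pt -> Prop) (f : pt -> R) : Prop :=
  forall x, Om x -> forall eps, 0 < eps -> exists delta, 0 < delta /\
    forall y, Om y -> ball x delta y -> Rabs (f y - f x) < eps.

Definition has_partial (k : nat) (f : pt -> R) (x : pt) (l : R) : Prop :=
  derivable_pt_lim (fun t => f (shift x k t)) 0 l.

Definition partial (k : nat) (f : pt -> R) (x : pt) : R :=
  epsilon (inhabits 0) (fun l => has_partial k f x l).

Fixpoint Ck (k : nat) (Om : pt -> Prop) (f : pt -> R) : Prop :=
  match k with
  | 0%nat => continuous_on Om f
  | S k' => continuous_on Om f /\
      (forall i, (i < 3)%nat -> forall x, Om x -> exists l, has_partial i f x l) /\
      (forall i, (i < 3)%nat -> Ck k' Om (partial i f))
  end.

Definition smooth (Om : pt -> Prop) (f : pt -> R) : Prop := forall k, Ck k Om f.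

Definition vec := nat -> R.
Definition mat := nat -> nat -> R.

Definition sum3 (g : nat -> R) : R := g 0%nat + g 1%nat + g 2%nat.
Definition dot (a b : vec) : R := sum3 (fun i => a i * b i).
Definition vnorm (v : vec) : R := sqrt (sum3 (fun i => v i ^ 2)).
Definition frob (A B : mat) : R := sum3 (fun i => sum3 (fun j => A i j * B i j)).
Definition delta (i j : nat) : R := if Nat.eqb i j then 1 else 0.

(** cofactor matrix of a 3x3 matrix (cyclic-index formula) *)
Definition cof3 (A : mat) (i j : nat) : R :=
  A (S i mod 3)%nat (S j mod 3)%nat * A (S (S i) mod 3)%nat (S (S j) mod 3)%nat
  - A (S i mod 3)%nat (S (S j) mod 3)%nat * A (S (S i) mod 3)%nat (S j mod 3)%nat.

Definition det3 (A : mat) : R := sum3 (fun j => A 0%nat j * cof3 A 0%nat j).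

(** rank of a 3x3 matrix = largest order of a non-vanishing minor
    (the entries of cof3 A are, up to sign, the 2x2 minors) *)
Definition rank3 (A : mat) : nat :=
  if excluded_middle_informative (det3 A <> 0) then 3%nat
  else if excluded_middle_informative
            (exists i j, (i < 3)%nat /\ (j < 3)%nat /\ cof3 A i j <> 0) then 2%nat
  else if excluded_middle_informative
            (exists i j, (i < 3)%nat /\ (j < 3)%nat /\ A i j <> 0) then 1%nat
  else 0%nat.

Definition grad (f : pt -> R) (x : pt) : vec := fun k => partial k f x.

(** Smooth surface patch T (embedded, without boundary), described locally as a
    regular level set, with n0 normal to T at points of T. *)
Definition surface_patch_with_normal (T : pt -> Prop) (n0 : pt -> vec) : Prop :=
  forall x, T x -> exists r, 0 < r /\ exists g : pt -> R,
    smooth (ball x r) g /\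
    (forall y, ball x r y -> vnorm (grad g y) <> 0) /\
    (forall y, ball x r y -> (T y <-> g y = 0)) /\
    (forall y, ball x r y -> T y -> exists c, forall i, (i < 3)%nat -> n0 y i = c * partial i g y).

(** tangential calculus: P = I - n0 (x) n0, grad_tau f = P grad f~ *)
Definition projP (n0 : pt -> vec) (x : pt) : mat :=
  fun i j => delta i j - n0 x i * n0 x j.

Definition tgrad (n0 : pt -> vec) (f : pt -> R) (x : pt) : vec :=
  fun j => sum3 (fun k => projP n0 x j k * partial k f x).

Definition tgradv (n0 : pt -> vec) (w : pt -> vec) (x : pt) : mat :=
  fun i j => tgrad n0 (fun y => w y i) x j.

Definition thess (n0 : pt -> vec) (f : pt -> R) (x : pt) : mat :=
  fun j k => tgrad n0 (fun y => tgrad n0 f y j) x k.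

Definition defF (n0 u : pt -> vec) (x : pt) : mat :=
  fun i j => projP n0 x i j + tgradv n0 u x i j.

Definition cofn (n0 u : pt -> vec) (x : pt) : vec :=
  fun i => sum3 (fun j => cof3 (defF n0 u x) i j * n0 x j).

Definition defnu (n0 u : pt -> vec) (x : pt) : vec :=
  fun i => cofn n0 u x i / vnorm (cofn n0 u x).

Definition Hnu (n0 u : pt -> vec) (x : pt) : mat :=
  fun j k => sum3 (fun i => defnu n0 u x i * thess n0 (fun y => u y i) x j k).

Definition FTgradnu (n0 u : pt -> vec) (x : pt) : mat :=
  fun j k => sum3 (fun i => defF n0 u x i j * tgradv n0 (defnu n0 u) x i k).

(* Since F n0 = 0 and n0 is a unit vector, det F = 0, so F^T cof(F) = det(F) I = 0 and
   F^T nu = 0 holds on the whole open set; the rank condition makes cof(F) n0 nonzero, so nu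
   is differentiable.  Differentiating F^T nu = 0 along e_k gives F^T (d_k nu) = -(d_k F)^T nu
   with d_k F = -(d_k n0 (x) n0 + n0 (x) d_k n0) + d_k grad_tau u; after tangential projection
   F^T grad_tau nu - grad_tau n0 = n0 (x) (grad_tau n0)^T nu - H_nu - (1 - n0.nu) grad_tau n0,
   and the first term is annihilated by any symmetric sigma with sigma n0 = 0. *)

From Stdlib Require Import Reals Lra Lia ClassicalEpsilon.
Open Scope R_scope.

Definition mxv (A : mat) (v : vec) : vec := fun i => sum3 (fun j => A i j * v j).

Definition cross (a b : vec) : vec := fun m =>
  a (S m mod 3)%nat * b (S (S m) mod 3)%nat - a (S (S m) mod 3)%nat * b (S m mod 3)%nat.

Definition unitv (j : nat) : vec := fun l => delta j l.

Lemma sum3_ext (f g : nat -> R) :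
  (forall i, (i < 3)%nat -> f i = g i) -> sum3 f = sum3 g.
Proof. intros H; unfold sum3; rewrite !H by lia; reflexivity. Qed.

Lemma frob_ext (s A B : mat) :
  (forall j k, (j < 3)%nat -> (k < 3)%nat -> A j k = B j k) -> frob s A = frob s B.
Proof. intros H; unfold frob, sum3; rewrite !H by lia; reflexivity. Qed.

Lemma sum3_sq_pos (v : vec) i : (i < 3)%nat -> v i <> 0 -> 0 < sum3 (fun m => v m ^ 2).
Proof.
  intros Hi Hv.
  assert (0 < v i ^ 2) by (simpl; rewrite Rmult_1_r; exact (Rsqr_pos_lt _ Hv)).
  pose proof (pow2_ge_0 (v 0%nat)); pose proof (pow2_ge_0 (v 1%nat));
    pose proof (pow2_ge_0 (v 2%nat)).
  unfold sum3; destruct i as [|[|[|i]]]; [lra | lra | lra | lia].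
Qed.

(* [cof A (a x b) = A a x A b] applied to [(n x e_j) x n = |n|^2 e_j - n_j n]. *)
Lemma cof3_cross (A : mat) (n : vec) i j : (i < 3)%nat -> (j < 3)%nat ->
  cof3 A i j * dot n n - n j * mxv (cof3 A) n i
  = cross (mxv A n) (mxv A (cross (unitv j) n)) i.
Proof.
  intros Hi Hj.
  destruct i as [|[|[|i]]]; try lia; destruct j as [|[|[|j]]]; try lia;
    unfold cross, mxv, unitv, cof3, dot, sum3, delta; simpl; ring.
Qed.

Lemma cof3_kernel (A : mat) (n : vec) :
  (forall i, (i < 3)%nat -> mxv A n i = 0) -> dot n n = 1 ->
  forall i j, (i < 3)%nat -> (j < 3)%nat -> cof3 A i j = n j * mxv (cof3 A) n i.
Proof.
  intros HA Hn i j Hi Hj.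
  pose proof (cof3_cross A n i j Hi Hj) as E.
  unfold cross at 1 in E; rewrite Hn, !HA in E by (apply Nat.mod_upper_bound; lia).
  lra.
Qed.

Lemma cof3_rank2_kernel (A : mat) (n : vec) :
  (forall i, (i < 3)%nat -> mxv A n i = 0) -> dot n n = 1 -> rank3 A = 2%nat ->
  0 < sum3 (fun i => mxv (cof3 A) n i ^ 2).
Proof.
  intros HA Hn.
  unfold rank3; destruct (excluded_middle_informative (det3 A <> 0)); [discriminate|].
  destruct (excluded_middle_informative _) as [[i [j [Hi [Hj Hc]]]]|];
    [intros _ | destruct (excluded_middle_informative _); discriminate].
  apply (sum3_sq_pos (mxv (cof3 A) n) i Hi).
  intros E; apply Hc; rewrite (cof3_kernel A n HA Hn i j Hi Hj), E; ring.
Qed.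

Lemma trmx_mul_cof3 (A : mat) (v : vec) j : (j < 3)%nat ->
  sum3 (fun i => A i j * mxv (cof3 A) v i) = det3 A * v j.
Proof.
  intros Hj; destruct j as [|[|[|j]]]; try lia; unfold mxv, det3, cof3, sum3; simpl; ring.
Qed.

Lemma trmx_cof3_mul (A : mat) (v : vec) j : (j < 3)%nat ->
  sum3 (fun i => cof3 A i j * mxv A v i) = det3 A * v j.
Proof.
  intros Hj; destruct j as [|[|[|j]]]; try lia; unfold mxv, det3, cof3, sum3; simpl; ring.
Qed.

Lemma det3_kernel (A : mat) (n : vec) :
  (forall i, (i < 3)%nat -> mxv A n i = 0) -> dot n n = 1 -> det3 A = 0.
Proof.
  intros HA Hn.
  assert (Hd : forall m, (m < 3)%nat -> det3 A * n m = 0).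
  { intros m Hm; rewrite <- trmx_cof3_mul by exact Hm; unfold sum3; rewrite !HA by lia; ring. }
  transitivity (det3 A * dot n n); [rewrite Hn; ring|].
  transitivity (sum3 (fun m => n m * (det3 A * n m))); [unfold dot, sum3; ring|].
  unfold sum3; rewrite !Hd by lia; ring.
Qed.

Lemma trmx_mul_cof3_kernel (A : mat) (n : vec) :
  (forall i, (i < 3)%nat -> mxv A n i = 0) -> dot n n = 1 ->
  forall j, (j < 3)%nat -> sum3 (fun i => A i j * mxv (cof3 A) n i) = 0.
Proof. intros HA Hn j Hj; rewrite trmx_mul_cof3, (det3_kernel A n HA Hn) by exact Hj; ring. Qed.

(* With [P = I - n (x) n], [P + p P] is the shape of [F = P + grad_tau u]; row [i] of [p] is the
   full gradient of [u_i]. *)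
Lemma proj_add_mul_proj_kernel (n : vec) (p : mat) i : (i < 3)%nat -> dot n n = 1 ->
  sum3 (fun j => ((delta i j - n i * n j)
                  + sum3 (fun l => (delta j l - n j * n l) * p i l)) * n j) = 0.
Proof.
  intros Hi Hn.
  transitivity ((1 - dot n n) * (n i + sum3 (fun l => p i l * n l))).
  - destruct i as [|[|[|i]]]; try lia; unfold dot, sum3, delta; simpl; ring.
  - rewrite Hn; ring.
Qed.

Lemma frob_sym_kernel_outer_sub (s B : mat) (n w : vec) :
  (forall i j, s i j = s j i) -> (forall i, (i < 3)%nat -> sum3 (fun j => s i j * n j) = 0) ->
  frob s (fun j k => n j * w k - B j k) = - frob s B.
Proof.
  intros Hs Hn.
  transitivity (sum3 (fun k => w k * sum3 (fun j => s j k * n j)) - frob s B).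
  { unfold frob, sum3; ring. }
  rewrite (sum3_ext _ (fun _ => 0)); [unfold sum3; ring|].
  intros k Hk; rewrite <- (Rmult_0_r (w k)), <- (Hn k Hk).
  unfold sum3; rewrite !(Hs k); reflexivity.
Qed.

Definition ex_partial (k : nat) (f : pt -> R) (x : pt) : Prop := exists l, has_partial k f x l.

Lemma partial_spec k f x : ex_partial k f x -> has_partial k f x (partial k f x).
Proof. intros H; unfold partial; apply epsilon_spec; exact H. Qed.

Lemma Ck_S_ex_partial m Om f i x : Ck (S m) Om f -> (i < 3)%nat -> Om x -> ex_partial i f x.
Proof. intros [_ [H _]] Hi Hx; exact (H i Hi x Hx). Qed.

Lemma Ck_S_partial m Om f i : Ck (S m) Om f -> (i < 3)%nat -> Ck m Om (partial i f).
Proof. intros [_ [_ H]] Hi; exact (H i Hi). Qed.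

Lemma shift0 x k : shift x k 0 = x.
Proof. destruct x; destruct k as [|[|k]]; simpl; f_equal; ring. Qed.

Lemma has_partial_eq k f x l1 l2 : has_partial k f x l1 -> l1 = l2 -> has_partial k f x l2.
Proof. intros H <-; exact H. Qed.

Lemma has_partial_const k (a : R) x : has_partial k (fun _ => a) x 0.
Proof. exact (derivable_pt_lim_const a 0). Qed.

Lemma has_partial_plus k f g x lf lg : has_partial k f x lf -> has_partial k g x lg ->
  has_partial k (fun y => f y + g y) x (lf + lg).
Proof. exact (derivable_pt_lim_plus _ _ _ _ _). Qed.

Lemma has_partial_minus k f g x lf lg : has_partial k f x lf -> has_partial k g x lg ->
  has_partial k (fun y => f y - g y) x (lf - lg).
Proof. exact (derivable_pt_lim_minus _ _ _ _ _). Qed.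

Lemma has_partial_mult k f g x lf lg : has_partial k f x lf -> has_partial k g x lg ->
  has_partial k (fun y => f y * g y) x (lf * g x + f x * lg).
Proof.
  intros Hf Hg; pose proof (derivable_pt_lim_mult _ _ _ _ _ Hf Hg) as H.
  cbv beta in H; rewrite shift0 in H; exact H.
Qed.

Lemma ex_partial_const k (a : R) x : ex_partial k (fun _ => a) x.
Proof. eexists; apply has_partial_const. Qed.

Lemma ex_partial_plus k f g x : ex_partial k f x -> ex_partial k g x ->
  ex_partial k (fun y => f y + g y) x.
Proof. intros [lf Hf] [lg Hg]; eexists; exact (has_partial_plus _ _ _ _ _ _ Hf Hg). Qed.

Lemma ex_partial_minus k f g x : ex_partial k f x -> ex_partial k g x ->
  ex_partial k (fun y => f y - g y) x.
Proof. intros [lf Hf] [lg Hg]; eexists; exact (has_partial_minus _ _ _ _ _ _ Hf Hg). Qed.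

Lemma ex_partial_mult k f g x : ex_partial k f x -> ex_partial k g x ->
  ex_partial k (fun y => f y * g y) x.
Proof. intros [lf Hf] [lg Hg]; eexists; exact (has_partial_mult _ _ _ _ _ _ Hf Hg). Qed.

Lemma ex_partial_pow2 k f x : ex_partial k f x -> ex_partial k (fun y => f y ^ 2) x.
Proof.
  intros H; exact (ex_partial_mult _ _ _ _ H
                     (ex_partial_mult _ _ (fun _ => 1) _ H (ex_partial_const _ _ _))).
Qed.

Lemma ex_partial_div k f g x : ex_partial k f x -> ex_partial k g x -> g x <> 0 ->
  ex_partial k (fun y => f y / g y) x.
Proof.
  intros [lf Hf] [lg Hg] Hgx; eexists.
  apply (derivable_pt_lim_div _ _ _ _ _ Hf Hg); cbv beta; rewrite shift0; exact Hgx.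
Qed.

Lemma ex_partial_sqrt k f x : ex_partial k f x -> 0 < f x -> ex_partial k (fun y => sqrt (f y)) x.
Proof.
  intros [l Hf] Hpos; eexists.
  eapply (derivable_pt_lim_comp (fun t => f (shift x k t)) sqrt _ _ _ Hf).
  apply derivable_pt_lim_sqrt; rewrite shift0; exact Hpos.
Qed.

Lemma ball_shift x k r h : Rabs h < r -> ball x r (shift x k h).
Proof.
  intros H; assert (h ^ 2 < r ^ 2).
  { rewrite <- (pow2_abs h); pose proof (Rabs_pos h); nra. }
  unfold ball, dist2; destruct k as [|[|k]]; simpl; nra.
Qed.

Lemma has_partial_zero_near k f x l r : 0 < r -> (forall y, ball x r y -> f y = 0) ->
  has_partial k f x l -> l = 0.
Proof.
  intros Hr Hf H.
  apply (uniqueness_limite (fun t => f (shift x k t)) 0); [exact H|].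
  intros eps Heps; exists (mkposreal r Hr); intros h _ Hh; simpl in Hh.
  rewrite Rplus_0_l, !Hf.
  - replace ((0 - 0) / h - 0) with 0 by (unfold Rdiv; ring); rewrite Rabs_R0; exact Heps.
  - apply ball_shift; rewrite Rabs_R0; exact Hr.
  - apply ball_shift; exact Hh.
Qed.

Ltac ex_partial_arith leaf :=
  repeat first [ leaf | apply ex_partial_const | apply ex_partial_minus
               | apply ex_partial_plus | apply ex_partial_mult ].

Lemma defF_kernel (n0 u : pt -> vec) y : dot (n0 y) (n0 y) = 1 ->
  forall i, (i < 3)%nat -> mxv (defF n0 u y) (n0 y) i = 0.
Proof.
  intros Hn i Hi.
  exact (proj_add_mul_proj_kernel (n0 y) (fun i l => partial l (fun z => u z i) y) i Hi Hn).
Qed.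

Lemma trmx_defF_defnu (n0 u : pt -> vec) y : dot (n0 y) (n0 y) = 1 ->
  forall j, (j < 3)%nat -> sum3 (fun i => defF n0 u y i j * defnu n0 u y i) = 0.
Proof.
  intros Hn j Hj; unfold defnu, Rdiv.
  transitivity (sum3 (fun i => defF n0 u y i j * cofn n0 u y i) * / vnorm (cofn n0 u y));
    [unfold sum3; ring|].
  pose proof (trmx_mul_cof3_kernel _ _ (defF_kernel n0 u y Hn) Hn j Hj) as H0.
  unfold mxv in H0; unfold cofn; rewrite H0; ring.
Qed.

Section DirectionalRegularity.

Variables (n0 u : pt -> vec) (x : pt) (k : nat).
Hypothesis n0_dk : forall i, (i < 3)%nat -> ex_partial k (fun y => n0 y i) x.
Hypothesis du_dk : forall i l, (i < 3)%nat -> (l < 3)%nat ->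
  ex_partial k (partial l (fun y => u y i)) x.

Lemma ex_partial_tgrad_u i j : (i < 3)%nat -> (j < 3)%nat ->
  ex_partial k (fun y => tgrad n0 (fun z => u z i) y j) x.
Proof.
  intros Hi Hj; unfold tgrad, projP, sum3.
  ex_partial_arith ltac:(first [ apply n0_dk; lia | apply du_dk; lia ]).
Qed.

Lemma has_partial_defF i j : (i < 3)%nat -> (j < 3)%nat ->
  has_partial k (fun y => defF n0 u y i j) x
    (partial k (fun y => tgrad n0 (fun z => u z i) y j) x
     - (partial k (fun y => n0 y i) x * n0 x j + n0 x i * partial k (fun y => n0 y j) x)).
Proof.
  intros Hi Hj; eapply has_partial_eq.
  - unfold defF, projP, tgradv.
    apply has_partial_plus; [apply has_partial_minus|].
    + apply has_partial_const.
    + apply has_partial_mult; apply partial_spec, n0_dk; lia.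
    + apply partial_spec, ex_partial_tgrad_u; lia.
  - cbv beta; ring.
Qed.

Lemma ex_partial_cofn i : (i < 3)%nat -> ex_partial k (fun y => cofn n0 u y i) x.
Proof.
  intros Hi; unfold cofn, cof3, sum3.
  ex_partial_arith ltac:(first
    [ apply n0_dk; lia
    | eexists; apply has_partial_defF; apply Nat.mod_upper_bound; lia ]).
Qed.

Lemma ex_partial_defnu : 0 < sum3 (fun m => cofn n0 u x m ^ 2) ->
  forall i, (i < 3)%nat -> ex_partial k (fun y => defnu n0 u y i) x.
Proof.
  intros Hpos i Hi; unfold defnu, vnorm; apply ex_partial_div.
  - apply ex_partial_cofn; exact Hi.
  - apply ex_partial_sqrt; [|exact Hpos]; unfold sum3.
    ex_partial_arith ltac:(apply ex_partial_pow2, ex_partial_cofn; lia).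
  - apply Rgt_not_eq, sqrt_lt_R0; exact Hpos.
Qed.

End DirectionalRegularity.

Lemma trmx_defF_partial_defnu (Om : pt -> Prop) (n0 u : pt -> vec) x k :
  open3 Om -> Om x -> (forall y, Om y -> dot (n0 y) (n0 y) = 1) ->
  (forall i, (i < 3)%nat -> ex_partial k (fun y => n0 y i) x) ->
  (forall i l, (i < 3)%nat -> (l < 3)%nat -> ex_partial k (partial l (fun y => u y i)) x) ->
  0 < sum3 (fun m => cofn n0 u x m ^ 2) ->
  forall j, (j < 3)%nat ->
  sum3 (fun i => defF n0 u x i j * partial k (fun y => defnu n0 u y i) x)
  = sum3 (fun i => (partial k (fun y => n0 y i) x * n0 x j
                    + n0 x i * partial k (fun y => n0 y j) x
                    - partial k (fun y => tgrad n0 (fun z => u z i) y j) x) * defnu n0 u x i).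
Proof.
  intros HOm Hx Hn Hn0 Hu Hpos j Hj.
  destruct (HOm x Hx) as [r [Hr Hball]].
  assert (H0 : forall i, (i < 3)%nat ->
            has_partial k (fun y => defF n0 u y i j * defnu n0 u y i) x
              ((partial k (fun y => tgrad n0 (fun z => u z i) y j) x
                - (partial k (fun y => n0 y i) x * n0 x j
                   + n0 x i * partial k (fun y => n0 y j) x)) * defnu n0 u x i
               + defF n0 u x i j * partial k (fun y => defnu n0 u y i) x)).
  { intros i Hi; apply has_partial_mult.
    - apply has_partial_defF; assumption.
    - apply partial_spec, ex_partial_defnu; assumption. }
  pose proof (has_partial_plus _ _ _ _ _ _
                (has_partial_plus _ _ _ _ _ _ (H0 0%nat ltac:(lia)) (H0 1%nat ltac:(lia)))
                (H0 2%nat ltac:(lia))) as Hsum.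
  apply (has_partial_zero_near k _ x _ r Hr) in Hsum.
  - unfold sum3; lra.
  - intros y Hy; exact (trmx_defF_defnu n0 u y (Hn y (Hball y Hy)) j Hj).
Qed.

Lemma FTgradnu_sub_tgradv (n0 u : pt -> vec) x :
  (forall j k, (j < 3)%nat -> (k < 3)%nat ->
     sum3 (fun i => defF n0 u x i j * partial k (fun y => defnu n0 u y i) x)
     = sum3 (fun i => (partial k (fun y => n0 y i) x * n0 x j
                       + n0 x i * partial k (fun y => n0 y j) x
                       - partial k (fun y => tgrad n0 (fun z => u z i) y j) x) * defnu n0 u x i)) ->
  forall j k, (j < 3)%nat -> (k < 3)%nat ->
  FTgradnu n0 u x j k - tgradv n0 n0 x j k
  = n0 x j * sum3 (fun i => defnu n0 u x i * tgradv n0 n0 x i k)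
    - (Hnu n0 u x j k + (1 - dot (n0 x) (defnu n0 u x)) * tgradv n0 n0 x j k).
Proof.
  intros Hd j k Hj Hk.
  transitivity (sum3 (fun l => projP n0 x k l
                   * sum3 (fun i => defF n0 u x i j * partial l (fun y => defnu n0 u y i) x))
                - tgradv n0 n0 x j k).
  { unfold FTgradnu, tgradv, tgrad, sum3; ring. }
  rewrite (sum3_ext _ (fun l => projP n0 x k l
             * sum3 (fun i => (partial l (fun y => n0 y i) x * n0 x j
                               + n0 x i * partial l (fun y => n0 y j) x
                               - partial l (fun y => tgrad n0 (fun z => u z i) y j) x)
                              * defnu n0 u x i)))
    by (intros l Hl; rewrite Hd by assumption; reflexivity).
  unfold Hnu, thess, tgradv, tgrad, dot, sum3; ring.
Qed.

Theorem mainTheorem3 (Om T : pt -> Prop) (n0 u : pt -> vec) (sigma : pt -> mat) :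
  open3 Om ->
  (forall x, T x -> Om x) ->
  surface_patch_with_normal T n0 ->
  (forall i, (i < 3)%nat -> smooth Om (fun y => n0 y i)) ->
  (forall y, Om y -> dot (n0 y) (n0 y) = 1) ->
  (forall i, (i < 3)%nat -> Ck 2 Om (fun y => u y i)) ->
  (forall x, T x -> rank3 (defF n0 u x) = 2%nat) ->
  (forall x, T x -> forall i j, sigma x i j = sigma x j i) ->
  (forall x, T x -> forall i, (i < 3)%nat -> sum3 (fun j => sigma x i j * n0 x j) = 0) ->
  forall x, T x ->
    frob (sigma x) (fun j k => FTgradnu n0 u x j k - tgradv n0 n0 x j k)
    = - frob (sigma x)
        (fun j k => Hnu n0 u x j k + (1 - dot (n0 x) (defnu n0 u x)) * tgradv n0 n0 x j k).
Proof.
  (* The identity is pointwise and uses only the extension of [n0] to [Om]. *)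
  intros HOm HTOm _ Hn Hnn Hu Hrank Hsym Hsn x Tx.
  pose proof (HTOm x Tx) as Omx.
  assert (Hpos : 0 < sum3 (fun m => cofn n0 u x m ^ 2))
    by exact (cof3_rank2_kernel _ _ (defF_kernel n0 u x (Hnn x Omx)) (Hnn x Omx) (Hrank x Tx)).
  assert (Hd := fun j k (Hj : (j < 3)%nat) (Hk : (k < 3)%nat) =>
    trmx_defF_partial_defnu Om n0 u x k HOm Omx Hnn
      (fun i Hi => Ck_S_ex_partial 0 Om _ k x (Hn i Hi 1%nat) Hk Omx)
      (fun i l Hi Hl => Ck_S_ex_partial 0 Om _ k x (Ck_S_partial 1 Om _ l (Hu i Hi) Hl) Hk Omx)
      Hpos j Hj).
  rewrite (frob_ext _ _ _ (FTgradnu_sub_tgradv n0 u x Hd)).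
  apply frob_sym_kernel_outer_sub; [exact (Hsym x Tx) | exact (Hsn x Tx)].
Qed.
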